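(* Let $\rho_0,\rho_1,\rho_2$ and the complex surface $E$ with holomorphic map $f\colon E\to\mathbb{CP}^1$ be as in the context, and let $s$ be a number with $\rho_0^{-1}<s<\rho_1^{-1}\rho_2$. Put $V'=\Delta(1,s)\times\Delta(\rho_1^{-1},\rho_0^{-1})$, $U'=\{(z_1,z_2)\in V' : |z_2|<|z_1|\}$, $V''=V\cup V'\subset\mathbb{C}^2$ (where $V=\Delta(1,\rho_2)\times\Delta(\rho_0^{-1})$), and let $Y=V''/\!\sim$ be the quotient obtained by identifying each point $(z_1,z_2)\in U'$ with $\psi(z_1,z_2)\in V'$, where $\psi\colon U'\to V'$ is the holomorphic embedding $\psi(z_1,z_2)=(z_1z_2^{-1},z_2)$. Then $Y$ is biholomorphic to the preimage $f^{-1}(\Delta(\rho_0^{-1}))$, where $\Delta(\rho_0^{-1})\subset\mathbb{CP}^1$ is the disk of the first chart described in the context.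
   Context: Notation: $\Delta(a,b)=\{z\in\mathbb{C}: a<|z|<b\}$, $\Delta(a)=\{z\in\mathbb{C}:|z|<a\}$. Fix positive numbers with $1<\rho_2<\rho_1^{-1}$ and $\rho_1\rho_2^{-1}<\rho_0<\rho_1$. Let $V=\Delta(1,\rho_2)\times\Delta(\rho_0^{-1})\subset\mathbb{C}^2$ with coordinates $(z_1,z_2)$. Let $W$ be the total space of Kodaira's genus-1 holomorphic Lefschetz fibration $h\colon W\to\Delta(\rho_1)$ with exactly one singular fiber $\Sigma=h^{-1}(0)$ (a rational curve with one node), defined as follows: $W-\Sigma=(\mathbb{C}^*\times\Delta(0,\rho_1))/\mathbb{Z}$, where $n\cdot(w_1,w_2)=(w_1w_2^n,w_2)$, $h$ is induced by $(w_1,w_2)\mapsto w_2$, and $W$ is the canonical extension of this elliptic fibration over $0$ with a nodal fiber. Let $\phi(w)=\exp\big(\frac{1}{4\pi i}(\log w)^2-\frac12\log w\big)$ (multivalued on $\Delta(0,\rho_1)$; any two branches differ by a factor $w^k$, $k\in\mathbb{Z}$), and let $\Phi\colon U\to W$, $U=\Delta(1,\rho_2)\times\Delta(\rho_1^{-1},\rho_0^{-1})\subset V$, be the single-valued map $\Phi(z_1,z_2)=[(z_1\phi(z_2^{-1}),z_2^{-1})]$, which is a biholomorphism onto its image. Define $E=V\cup_\Phi W$ by identifying $U$ with $\Phi(U)$ via $\Phi$, and let $f\colon E\to\mathbb{CP}^1$ be $(z_1,z_2)\mapsto z_2$ on $V$ and $h$ on $W$, where $\mathbb{CP}^1$ is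 obtained by gluing the disks $\Delta(\rho_0^{-1})$ and $\Delta(\rho_1)$ via the inversion $z\mapsto z^{-1}$ identifying $\Delta(\rho_1^{-1},\rho_0^{-1})\subset\Delta(\rho_0^{-1})$ with $\Delta(\rho_0,\rho_1)\subset\Delta(\rho_1)$. *)

From Stdlib Require Import Reals Relations.
From Coquelicot Require Import Coquelicot.
Open Scope R_scope.
Open Scope C_scope.

Definition C2 : Type := (C * C)%type.
Definition C2_NM : NormedModule C_AbsRing :=
  prod_NormedModule C_AbsRing C_NormedModule C_NormedModule.

Definition cexp (z : C) : C :=
  (exp (Re z) * cos (Im z), exp (Re z) * sin (Im z))%R.

Definition annulus (a b : R) (z : C) : Prop := (a < Cmod z < b)%R.
Definition disk (a : R) (z : C) : Prop := (Cmod z < a)%R.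

(* holomorphic map C^2 -> C^2 on an open set O: complex-Frechet differentiable
   (derivative C-linear) at every point of O *)
Definition holo_on (O : C2 -> Prop) (g : C2 -> C2) : Prop :=
  forall x : C2, O x ->
    exists l : C2 -> C2,
      @filterdiff C_AbsRing C2_NM C2_NM g (@locally C2_NM x) l.

Definition ball2 (x : C2) (e : R) (y : C2) : Prop :=
  (Cmod (fst y - fst x) < e /\ Cmod (snd y - snd x) < e)%R.

(* A space obtained by gluing open pieces of C^2 (indexed by nat tags):
   a domain of "points in charts" and a gluing relation; points of the space
   are the classes of the equivalence relation generated by the gluing
   relation on the domain. *)
Record gluing := Gluing {
  gdom : nat * C2 -> Prop ;
  grel : nat * C2 -> nat * C2 -> Prop }.

Definition geqv (G : gluing) : nat * C2 -> nat * C2 -> Prop :=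
  clos_refl_sym_trans _ (fun p q => gdom G p /\ gdom G q /\ grel G p q).

(* F (a map on chart points, representing a map of the quotients) is
   holomorphic: near every chart point it agrees, up to the identification,
   with a holomorphic map into a single chart. *)
Definition glued_holo (G1 G2 : gluing) (F : nat * C2 -> nat * C2) : Prop :=
  forall p, gdom G1 p ->
    exists (e : R) (j : nat) (g : C2 -> C2),
      (0 < e)%R /\ holo_on (ball2 (snd p) e) g /\
      forall y, ball2 (snd p) e y -> gdom G1 (fst p, y) ->
        gdom G2 (j, g y) /\ geqv G2 (F (fst p, y)) (j, g y).

Definition biholomorphic (G1 G2 : gluing) : Prop :=
  exists (F H : nat * C2 -> nat * C2),
    (forall p, gdom G1 p -> gdom G2 (F p)) /\
    (forall q, gdom G2 q -> gdom G1 (H q)) /\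
    (forall p p', gdom G1 p -> gdom G1 p' -> geqv G1 p p' -> geqv G2 (F p) (F p')) /\
    (forall q q', gdom G2 q -> gdom G2 q' -> geqv G2 q q' -> geqv G1 (H q) (H q')) /\
    (forall p, gdom G1 p -> geqv G1 (H (F p)) p) /\
    (forall q, gdom G2 q -> geqv G2 (F (H q)) q) /\
    glued_holo G1 G2 F /\ glued_holo G2 G1 H.

Definition V (r0 r2 : R) (z : C2) : Prop :=
  annulus 1 r2 (fst z) /\ disk (/ r0) (snd z).
Definition V' (r0 r1 s : R) (z : C2) : Prop :=
  annulus 1 s (fst z) /\ annulus (/ r1) (/ r0) (snd z).
Definition U' (r0 r1 s : R) (z : C2) : Prop :=
  V' r0 r1 s z /\ (Cmod (snd z) < Cmod (fst z))%R.
Definition psi (z : C2) : C2 := (fst z / snd z, snd z).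

Definition Y_gluing (r0 r1 r2 s : R) : gluing := {|
  gdom := fun p => fst p = 0%nat /\ (V r0 r2 (snd p) \/ V' r0 r1 s (snd p)) ;
  grel := fun p q => fst p = 0%nat /\ fst q = 0%nat /\
            U' r0 r1 s (snd p) /\ V' r0 r1 s (snd q) /\ snd q = psi (snd p) |}.

(* ---- The space f^{-1}(Delta(r0^{-1})) in E ----
   Since 0 (the image of the singular fibre) corresponds to z2 = infinity,
   which is not in Delta(r0^{-1}), f^{-1}(Delta(r0^{-1})) is V glued via Phi
   to h^{-1}(Delta(r0,r1)) = (C^* x Delta(r0,r1))/Z.
   Tag 0: the chart V; tag 1: the covering chart C^* x Delta(r0,r1) of
   h^{-1}(Delta(r0,r1)), with (w1,w2) ~ (w1 w2^n, w2). *)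
Definition Wchart (r0 r1 : R) (w : C2) : Prop :=
  fst w <> 0 /\ annulus r0 r1 (snd w).
Definition Uset (r0 r1 r2 : R) (z : C2) : Prop :=
  annulus 1 r2 (fst z) /\ annulus (/ r1) (/ r0) (snd z).

(* branch-free description of Phi: (z1,z2) is glued to
   (z1 * exp((log w)^2/(4 pi i) - (log w)/2), w) with w = z2^{-1}, for some
   (hence, up to the Z-action, any) logarithm L of w *)
Definition Phi_rel (z w : C2) : Prop :=
  snd w = / snd z /\
  exists L : C, cexp L = snd w /\
    fst w = fst z * cexp (L * L / (4 * PI * Ci) - L / 2).

Definition E0_gluing (r0 r1 r2 : R) : gluing := {|
  gdom := fun p => (fst p = 0%nat /\ V r0 r2 (snd p)) \/
                   (fst p = 1%nat /\ Wchart r0 r1 (snd p)) ;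
  grel := fun p q =>
    (fst p = 1%nat /\ fst q = 1%nat /\ snd (snd q) = snd (snd p) /\
       fst (snd q) = fst (snd p) * snd (snd p)) \/
    (fst p = 0%nat /\ fst q = 1%nat /\ Uset r0 r1 r2 (snd p) /\
       Phi_rel (snd p) (snd q)) |}.

From Stdlib Require Import Reals Lra Lia ZArith Relations ClassicalEpsilon.
From Coquelicot Require Import Coquelicot.
Open Scope R_scope.

(* The biholomorphism is the identity on [V] and sends a point [z] of [V']
   outside [V] to [Phi z = (z1 phi(w), w)], [w = 1/z2], in the chart
   [C^* x Delta(r0, r1)] of [E]. Changing the branch of [log w] by [2 pi i k]
   multiplies [phi(w)] by [w^k], i.e. moves [Phi z] by the deck transformation
   [(w1, w2) |-> (w1 w2^k, w2)]; and [Phi (z1/z2, z2)] is [Phi (z1, z2)] moved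
   by one deck step, so the map respects [psi]. Conversely, two points of [V']
   with equivalent images differ by [z1' = z1 w^k]; since [1 < |z1|, |z1'| < s]
   and [s r1^2 < 1], [|k| <= 1], and [k = +-1] is exactly the gluing [psi].
   The map is onto because the annulus [1 < |z1| < s] is wider than one deck
   step ([s > 1/r0]), and its inverse is holomorphic in charts built from local
   branches of the logarithm. *)

(** * Exponential, periods and logarithm *)

Lemma cexp_add a b : cexp (a + b)%C = (cexp a * cexp b)%C.
Proof.
  destruct a as [x y], b as [u v]; unfold cexp; simpl.
  rewrite exp_plus, cos_plus, sin_plus.
  apply injective_projections; simpl; ring.
Qed.

Lemma Cmod_cexp z : Cmod (cexp z) = exp (Re z).
Proof.
  destruct z as [x y]; unfold cexp, Cmod; simpl.
  match goal with |- sqrt ?a = _ => replace a with (exp x * exp x) end.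
  - apply sqrt_square. left; apply exp_pos.
  - transitivity (exp x * exp x * (sin y ^ 2 + cos y ^ 2)); [|ring].
    rewrite <- !Rsqr_pow2, sin2_cos2. ring.
Qed.

Lemma cexp_neq0 z : cexp z <> 0%C.
Proof.
  intro H. assert (E : Cmod (cexp z) = 0) by (rewrite H; apply Cmod_0).
  rewrite Cmod_cexp in E. pose proof (exp_pos (Re z)); lra.
Qed.

Lemma cexp_0 : cexp 0%C = 1%C.
Proof. unfold cexp; simpl; rewrite exp_0, cos_0, sin_0. apply injective_projections; simpl; ring. Qed.

Lemma cexp_opp z : cexp (- z)%C = (/ cexp z)%C.
Proof.
  pose proof (cexp_neq0 z).
  replace (cexp (- z)) with (cexp (- z + z)%C * / cexp z)%C.
  - rewrite Cplus_comm, Cplus_opp_r, cexp_0. ring.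
  - rewrite cexp_add. field. auto.
Qed.

Lemma cexp_sub a b : cexp (a - b)%C = (cexp a / cexp b)%C.
Proof. unfold Cminus, Cdiv. rewrite cexp_add, cexp_opp. reflexivity. Qed.

Lemma RtoC_PI_neq0 : RtoC PI <> 0%C.
Proof. intro H. injection H as H. apply PI_neq0; auto. Qed.

Lemma Cinv_neq0 (w : C) : w <> 0%C -> (/ w)%C <> 0%C.
Proof. intros H H'. apply C1_nz. rewrite <- (Cinv_l w H), H'. ring. Qed.

Lemma Cinv_involutive (w : C) : w <> 0%C -> (/ / w)%C = w.
Proof. intro H. pose proof (Cinv_neq0 w H). field. auto. Qed.

Definition period (k : Z) : C := (0, 2 * PI * IZR k)%R.

Lemma period_eq k : period k = (2 * PI * Ci * IZR k)%C.
Proof. unfold period; apply injective_projections; simpl; ring. Qed.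

Lemma cexp_period k : cexp (period k) = 1%C.
Proof.
  unfold cexp, period; simpl. rewrite exp_0.
  replace (2 * PI * IZR k) with (2 * (IZR k * PI)) by ring.
  rewrite cos_2a_sin, sin_2a, (sin_eq_0_1 (IZR k * PI) (ex_intro _ k eq_refl)).
  apply injective_projections; simpl; ring.
Qed.

Lemma cexp_eq_period a b : cexp a = cexp b -> exists k : Z, b = (a + period k)%C.
Proof.
  intro H.
  assert (Hc : cexp (b - a)%C = 1%C).
  { rewrite cexp_sub, H. field. apply cexp_neq0. }
  destruct (b - a)%C as [x y] eqn:Eba.
  assert (Hx : x = 0).
  { assert (E : Cmod (cexp (x, y)) = 1) by (rewrite Hc; apply Cmod_1).
    rewrite Cmod_cexp in E. simpl in E. rewrite <- (ln_exp x), E. apply ln_1. }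
  subst x. unfold cexp in Hc; simpl in Hc. rewrite exp_0 in Hc.
  injection Hc as Hcos _. rewrite Rmult_1_l in Hcos.
  replace y with (2 * (y / 2)) in Hcos by field.
  rewrite cos_2a_sin in Hcos.
  destruct (sin_eq_0_0 (y / 2)) as [k Hk]; [nra|].
  exists k.
  replace b with (a + (b - a))%C by ring. rewrite Eba.
  unfold period. apply injective_projections; simpl; lra.
Qed.

(* The paper's [phi w] is [cexp (phase L)] for any logarithm [L] of [w]. *)
Definition phase (L : C) : C := (L * L / (4 * PI * Ci) - L / 2)%C.

Lemma Z_mul_pred_even (k : Z) : exists m : Z, (k * (k - 1) = 2 * m)%Z.
Proof.
  destruct (Zeven_odd_dec k) as [He|Ho].
  - destruct (Zeven_ex _ He) as [j ->]. exists (j * (2 * j - 1))%Z. ring.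
  - destruct (Zodd_ex _ Ho) as [j ->]. exists (j * (2 * j + 1))%Z. ring.
Qed.

Lemma cexp_phase_period L k :
  cexp (phase (L + period k)) = (cexp (phase L) * cexp (IZR k * L))%C.
Proof.
  destruct (Z_mul_pred_even k) as [m Hm].
  assert (Hm' : RtoC (IZR m) = (IZR k * (IZR k - 1) / 2)%C).
  { apply (f_equal IZR) in Hm. rewrite mult_IZR, minus_IZR, mult_IZR in Hm.
    rewrite <- RtoC_minus, <- RtoC_mult, <- RtoC_div by lra. f_equal. lra. }
  assert (E : phase (L + period k) = (phase L + IZR k * L + period m)%C).
  { unfold phase. rewrite !period_eq, Hm'.
    field. split; [apply Ci_nz | apply RtoC_PI_neq0]. }
  rewrite E, !cexp_add, cexp_period. ring.
Qed.

Definition Clog (w : C) : C :=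
  (ln (Cmod w),
   if Rle_dec 0 (Im w) then acos (Re w / Cmod w) else - acos (Re w / Cmod w))%R.

Lemma cexp_Clog (w : C) : w <> 0%C -> cexp (Clog w) = w.
Proof.
  intro Hw. pose proof (proj1 (Cmod_gt_0 w) Hw) as Hm.
  pose proof (Cmod2_alt w) as Hs.
  pose proof (re_le_Cmod w) as Hre.
  assert (Hr : -1 <= Re w / Cmod w <= 1).
  { apply Rabs_le_between in Hre.
    split; apply (Rmult_le_reg_r (Cmod w)); auto;
      unfold Rdiv; rewrite Rmult_assoc, Rinv_l, Rmult_1_r by lra; lra. }
  assert (Hsq : sqrt (1 - (Re w / Cmod w)²) = Rabs (Im w) / Cmod w).
  { replace (1 - (Re w / Cmod w)²) with ((Im w / Cmod w)²).
    - rewrite sqrt_Rsqr_abs. unfold Rdiv. rewrite Rabs_mult, Rabs_inv.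
      rewrite (Rabs_pos_eq (Cmod w)); lra.
    - unfold Rsqr. simpl in Hs. field_simplify_eq; [nra | lra]. }
  unfold cexp, Clog. destruct w as [a b]. simpl in *.
  rewrite exp_ln by auto.
  destruct (Rle_dec 0 b).
  - rewrite cos_acos, sin_acos by auto. rewrite Hsq, Rabs_pos_eq by auto.
    f_equal; field; lra.
  - rewrite cos_neg, sin_neg, cos_acos, sin_acos by auto. rewrite Hsq, Rabs_left by lra.
    f_equal; field; lra.
Qed.

(** * Complex differentiability *)

Lemma Cmod_sub_ge (a b : C) : Rabs (Cmod a - Cmod b) <= Cmod (a - b).
Proof. exact (@norm_triangle_inv _ C_NormedModule a b). Qed.

Lemma Cmod_le_Rabs_add (z : C) : Cmod z <= Rabs (Re z) + Rabs (Im z).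
Proof.
  unfold Cmod. destruct z as [a b]; simpl.
  pose proof (Rabs_pos a). pose proof (Rabs_pos b).
  rewrite <- (sqrt_Rsqr (Rabs a + Rabs b)) by lra.
  apply sqrt_le_1_alt. unfold Rsqr.
  rewrite <- (Rabs_pos_eq (a * (a * 1))), <- (Rabs_pos_eq (b * (b * 1))) by nra.
  rewrite !Rabs_mult, Rabs_R1. nra.
Qed.

Lemma sin_taylor_bound_pos (y : R) : 0 <= y <= 1/2 -> y - y ^ 3 / 6 <= sin y <= y.
Proof.
  intro Hy. pose proof PI2_3_2.
  pose proof (sin_bound y 0 ltac:(lra) ltac:(lra)) as [Hlo Hhi].
  unfold sin_approx, sin_term in Hlo, Hhi. simpl in *.
  assert (Hy2 : 0 <= y * y <= 1) by nra.
  assert (Hy3 : 0 <= y * (y * (y * 1))) by (rewrite Rmult_1_r; apply Rmult_le_pos; nra).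
  assert (y * (y * (y * (y * (y * 1)))) <= y * (y * (y * 1))).
  { replace (y * (y * (y * (y * (y * 1))))) with (y * (y * (y * 1)) * (y * y)) by ring. nra. }
  split; lra.
Qed.

Lemma sin_taylor_bound (y : R) :
  Rabs y <= 1/2 -> Rabs (sin y) <= Rabs y /\ Rabs (sin y - y) <= Rabs y ^ 3 / 6.
Proof.
  intro Hy. assert (Hy3 : 0 <= Rabs y ^ 3 <= Rabs y).
  { pose proof (Rabs_pos y). assert (0 <= Rabs y * Rabs y <= 1) by nra.
    simpl. rewrite Rmult_1_r. split; [apply Rmult_le_pos|]; nra. }
  destruct (Rle_dec 0 y) as [Hp|Hn].
  - rewrite (Rabs_pos_eq y) in * by auto. pose proof (sin_taylor_bound_pos y ltac:(lra)).
    split; apply Rabs_le; lra.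
  - rewrite (Rabs_left y) in * by lra. pose proof (sin_taylor_bound_pos (- y) ltac:(lra)).
    rewrite sin_neg in *. split; apply Rabs_le; lra.
Qed.

Lemma cos_taylor_bound (y : R) : Rabs y <= 1/2 -> 1 - y ^ 2 / 2 <= cos y <= 1.
Proof.
  intro Hy. apply Rabs_le_between in Hy. pose proof PI2_3_2.
  pose proof (cos_bound y 0 ltac:(lra) ltac:(lra)) as [Hlo _].
  unfold cos_approx, cos_term in Hlo. simpl in Hlo.
  split; [simpl; lra | apply COS_bound].
Qed.

Lemma exp_taylor_bound (x : R) : Rabs x <= 1/2 ->
  0 <= exp x - 1 - x <= 2 * x ^ 2 /\ exp x <= 2 /\ Rabs (exp x - 1) <= 2 * Rabs x.
Proof.
  intro Hx. pose proof (Rabs_pos x) as Hx0. apply Rabs_le_between in Hx as Hx'.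
  pose proof (exp_ineq1_le x). pose proof (exp_ineq1_le (- x)).
  assert (E : exp x * exp (- x) = 1) by (rewrite <- exp_plus, Rplus_opp_r; apply exp_0).
  pose proof (exp_pos x). pose proof (exp_pos (- x)).
  assert (U : (exp x - 1 - x) * (1 - x) <= x ^ 2) by nra.
  assert (U2 : exp x - 1 - x <= 2 * x ^ 2) by nra.
  assert (x ^ 2 <= Rabs x / 2).
  { simpl. rewrite <- (Rabs_pos_eq (x * (x * 1))) by nra. rewrite !Rabs_mult, Rabs_R1. nra. }
  pose proof (Rle_abs x). pose proof (Rle_abs (- x)) as Hn. rewrite Rabs_Ropp in Hn.
  repeat split; try nra. apply Rabs_le. lra.
Qed.

Lemma cexp_taylor (h : C) : Cmod h <= 1/2 -> Cmod (cexp h - 1 - h) <= 4 * (Cmod h * Cmod h).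
Proof.
  intro Hh. pose proof (re_le_Cmod h) as Hx. pose proof (Rmax_Cmod h) as Hxy.
  pose proof (Cmod2_alt h) as Hs.
  destruct h as [x y]. simpl in *.
  pose proof (Rmax_r (Rabs x) (Rabs y)) as Hy.
  set (A := exp x * cos y - 1 - x). set (B := exp x * sin y - y).
  assert (E : (cexp (x, y) - 1 - (x, y))%C = (A, B)).
  { unfold cexp, A, B. apply injective_projections; simpl; ring. }
  rewrite E. eapply Rle_trans; [apply Cmod_le_Rabs_add|]. simpl.
  destruct (exp_taylor_bound x ltac:(lra)) as [[E1 E2] [E3 E4]].
  destruct (cos_taylor_bound y ltac:(lra)) as [C1 C2].
  destruct (sin_taylor_bound y ltac:(lra)) as [S1 S2].
  pose proof (exp_pos x). pose proof (Rabs_pos x). pose proof (Rabs_pos y).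
  pose proof (Rabs_pos (sin y)). pose proof (Rabs_pos (exp x - 1)).
  assert (Hxx : Rabs x * Rabs x = x * x) by (rewrite <- Rabs_mult; apply Rabs_pos_eq; nra).
  assert (Hyy : Rabs y * Rabs y = y * y) by (rewrite <- Rabs_mult; apply Rabs_pos_eq; nra).
  assert (HA : Rabs A <= 2 * x ^ 2 + y ^ 2).
  { assert (- y ^ 2 <= exp x * (cos y - 1) <= 0).
    { pose proof (pow2_ge_0 y). split.
      - apply Rle_trans with (exp x * (- (y ^ 2 / 2))); [nra|].
        apply Rmult_le_compat_l; lra.
      - apply Rmult_le_0_l; lra. }
    unfold A. apply Rabs_le. split; nra. }
  assert (HB : Rabs B <= 2 * Rabs x * Rabs y + Rabs y ^ 3 / 6).
  { unfold B. replace (exp x * sin y - y) with ((exp x - 1) * sin y + (sin y - y)) by ring.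
    eapply Rle_trans; [apply Rabs_triang|]. rewrite Rabs_mult. nra. }
  assert (Rabs y ^ 3 / 6 <= y * y).
  { replace (Rabs y ^ 3) with (Rabs y * (Rabs y * Rabs y)) by ring. rewrite Hyy. nra. }
  assert (2 * Rabs x * Rabs y <= x * x + y * y) by (pose proof (pow2_ge_0 (Rabs x - Rabs y)); nra).
  simpl in *. nra.
Qed.

Definition ex_cdiff (f : C -> C) (x : C) : Prop :=
  @ex_filterdiff C_AbsRing C_NormedModule C_NormedModule f (locally x).

Lemma is_linear_Cmult_r (l : C) :
  @is_linear C_AbsRing C_NormedModule C_NormedModule (fun y => (y * l)%C).
Proof.
  split.
  - intros a b. change ((a + b) * l = a * l + b * l)%C. ring.
  - intros k a. change ((k * a) * l = k * (a * l))%C. ring.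
  - exists (Cmod l + 1). pose proof (Cmod_ge_0 l). split; [lra|].
    intros a. change (Cmod (a * l) <= (Cmod l + 1) * Cmod a).
    rewrite Cmod_mult. pose proof (Cmod_ge_0 a). nra.
Qed.

Lemma ex_cdiff_quadratic_remainder (f : C -> C) (x l : C) (K d : R) : 0 < d -> 0 <= K ->
  (forall h : C, Cmod h < d -> Cmod (f (x + h) - f x - h * l)%C <= K * (Cmod h * Cmod h)) ->
  ex_cdiff f x.
Proof.
  intros Hd HK Hb. exists (fun y => (y * l)%C). split; [apply is_linear_Cmult_r|].
  intros x' Hx'. apply (@is_filter_lim_locally_unique C_AbsRing C_NormedModule) in Hx'.
  subst x'. intros eps. apply (@locally_le_locally_norm C_AbsRing C_NormedModule x).
  pose proof (cond_pos eps).
  assert (Hdl : 0 < Rmin d (eps / (K + 1))) by (apply Rmin_glb_lt; [|apply Rdiv_lt_0_compat]; lra).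
  exists (mkposreal _ Hdl). intros y Hy. unfold ball_norm in Hy. simpl in Hy.
  change (Cmod (f y - f x - (y - x) * l)%C <= eps * Cmod (y - x)%C).
  change (Cmod (y - x)%C < Rmin d (eps / (K + 1))) in Hy.
  pose proof (Rmin_l d (eps / (K + 1))). pose proof (Rmin_r d (eps / (K + 1))).
  set (h := (y - x)%C) in *. replace y with (x + h)%C by (unfold h; ring).
  specialize (Hb h ltac:(lra)). pose proof (Cmod_ge_0 h).
  assert (K * Cmod h <= eps).
  { apply Rle_trans with ((K + 1) * (eps / (K + 1))); [nra|]. right; field; lra. }
  nra.
Qed.

Lemma ex_cdiff_cexp (z : C) : ex_cdiff cexp z.
Proof.
  pose proof (exp_pos (Re z)).
  apply (ex_cdiff_quadratic_remainder cexp z (cexp z) (4 * exp (Re z)) (1/2)); [lra|lra|].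
  intros h Hh.
  replace (cexp (z + h) - cexp z - h * cexp z)%C with (cexp z * (cexp h - 1 - h))%C
    by (rewrite cexp_add; ring).
  rewrite Cmod_mult, Cmod_cexp. pose proof (cexp_taylor h ltac:(lra)). nra.
Qed.

Lemma ex_cdiff_quadratic (a b v : C) : ex_cdiff (fun v => a * (v * v) + b * v)%C v.
Proof.
  apply (ex_cdiff_quadratic_remainder _ v (2 * a * v + b)%C (Cmod a) 1);
    [lra | apply Cmod_ge_0 |].
  intros h _.
  replace (a * ((v + h) * (v + h)) + b * (v + h) - (a * (v * v) + b * v) - h * (2 * a * v + b))%C
    with (a * (h * h))%C by ring.
  rewrite !Cmod_mult. lra.
Qed.

Lemma ex_cdiff_ext (f g : C -> C) (x : C) : (forall y, f y = g y) -> ex_cdiff f x -> ex_cdiff g x.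
Proof. apply ex_filterdiff_ext. Qed.

Lemma phase_quadratic (v : C) : phase v = (/ (4 * PI * Ci) * (v * v) - / 2 * v)%C.
Proof.
  assert (RtoC 4 <> 0%C) by (intro H; injection H; lra).
  unfold phase. field. repeat split; auto using Ci_nz, RtoC_PI_neq0.
Qed.

Lemma ex_cdiff_phase_opp (v : C) : ex_cdiff (fun v => phase (- v)) v.
Proof.
  apply (ex_cdiff_ext (fun v => / (4 * PI * Ci) * (v * v) + / 2 * v)%C).
  - intro y. rewrite phase_quadratic. ring.
  - apply ex_cdiff_quadratic.
Qed.

Lemma ex_cdiff_phase_shift (k : Z) (v : C) : ex_cdiff (fun v => - phase v - IZR k * v)%C v.
Proof.
  apply (ex_cdiff_ext (fun v => - / (4 * PI * Ci) * (v * v) + (/ 2 - IZR k) * v)%C).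
  - intro y. rewrite phase_quadratic. ring.
  - apply ex_cdiff_quadratic.
Qed.

Lemma Cmod_near_1 (u : C) (e : R) : Cmod (u - 1) < e -> 1 - e < Cmod u < 1 + e.
Proof.
  intro H. pose proof (Cmod_sub_ge u 1) as Hd. rewrite Cmod_1 in Hd.
  apply Rabs_le_between in Hd. lra.
Qed.

Lemma Clog_near_1 (u : C) : Cmod (u - 1) < 1/10000 -> Cmod (Clog u) <= 1/16.
Proof.
  intro Hu. pose proof (Cmod_near_1 u _ Hu) as Hm.
  eapply Rle_trans; [apply Cmod_le_Rabs_add|]. unfold Clog. simpl.
  set (m := Cmod u) in *.
  assert (Hln : Rabs (ln m) <= 2 / 10000).
  { pose proof (exp_ineq1_le (ln m)) as Hup. rewrite exp_ln in Hup by lra.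
    pose proof (exp_ineq1_le (ln (/ m))) as Hlo.
    rewrite exp_ln in Hlo by (apply Rinv_0_lt_compat; lra). rewrite ln_Rinv in Hlo by lra.
    assert (/ m - 1 <= 2 / 10000).
    { apply (Rmult_le_reg_r m); [lra|]. rewrite Rmult_minus_distr_r, Rinv_l by lra. lra. }
    apply Rabs_le. lra. }
  assert (Hre : Rabs (Re u - 1) <= Cmod (u - 1)).
  { replace (Re u - 1) with (Re (u - 1)%C) by (unfold Cminus; rewrite re_plus, re_opp; reflexivity).
    apply re_le_Cmod. }
  apply Rabs_le_between in Hre.
  pose proof (re_le_Cmod u) as Hreu. apply Rabs_le_between in Hreu. fold m in Hreu.
  set (t := Re u / m).
  assert (Ht : 9997 / 10000 <= t <= 1).
  { unfold t. split; apply (Rmult_le_reg_r m); try lra;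
      replace (Re u / m * m) with (Re u) by (field; lra); nra. }
  assert (Hcos : cos (1/32) < 9997 / 10000).
  { pose proof PI2_3_2. pose proof (cos_bound (1/32) 0 ltac:(lra) ltac:(lra)) as [_ H2].
    unfold cos_approx, cos_term in H2. simpl in H2. lra. }
  pose proof (acos_bound t). pose proof PI2_3_2.
  assert (Hac : acos t <= 1/32).
  { destruct (Rle_dec (acos t) (1/32)) as [?|Hn]; auto. exfalso.
    pose proof (cos_decreasing_1 (1/32) (acos t) ltac:(lra) ltac:(lra) ltac:(lra) ltac:(lra) ltac:(lra)).
    rewrite cos_acos in * by lra. lra. }
  assert (Rabs (if Rle_dec 0 (Im u) then acos t else - acos t) <= 1/32).
  { destruct (Rle_dec 0 (Im u)); rewrite ?Rabs_Ropp, Rabs_pos_eq; lra. }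
  lra.
Qed.

(* [Clog] is a right inverse of [cexp] that stays small near 1 ([Clog_near_1]),
   so [cexp_taylor] applies to differences of its values. *)
Lemma ex_cdiff_Clog (u : C) : Cmod (u - 1) < 1/10000 -> ex_cdiff Clog u.
Proof.
  intro Hu. pose proof (Cmod_near_1 u _ Hu) as Hm.
  assert (Hunz : u <> 0%C) by (apply Cmod_gt_0; lra).
  apply (ex_cdiff_quadratic_remainder Clog u (/ u)%C 64 (1/10000 - Cmod (u - 1))); [lra|lra|].
  intros h Hh.
  assert (Hu' : Cmod (u + h - 1) < 1/10000).
  { replace (u + h - 1)%C with ((u - 1) + h)%C by ring.
    pose proof (Cmod_triangle (u - 1) h). lra. }
  pose proof (Cmod_near_1 _ _ Hu') as Hm'.
  assert (Hu'nz : (u + h)%C <> 0%C) by (apply Cmod_gt_0; lra).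
  set (a := (Clog (u + h) - Clog u)%C).
  assert (Ha : Cmod a <= 1/8).
  { unfold a, Cminus. eapply Rle_trans; [apply Cmod_triangle|]. rewrite Cmod_opp.
    pose proof (Clog_near_1 u Hu). pose proof (Clog_near_1 _ Hu'). lra. }
  assert (Hea : (cexp a - 1)%C = (h / u)%C).
  { unfold a. rewrite cexp_sub, !cexp_Clog by auto. field. auto. }
  pose proof (cexp_taylor a ltac:(lra)) as Ht.
  assert (Hhu : Cmod (h / u) <= 2 * Cmod h).
  { unfold Cdiv. rewrite Cmod_mult, Cmod_inv by auto.
    assert (/ Cmod u <= 2) by (replace 2 with (/ (1/2)) by field; apply Rinv_le_contravar; lra).
    pose proof (Cmod_ge_0 h). nra. }
  assert (Haa : Cmod a <= 4 * Cmod h).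
  { assert (Cmod a <= Cmod (cexp a - 1) + Cmod (cexp a - 1 - a)).
    { replace a with ((cexp a - 1) - (cexp a - 1 - a))%C at 1 by ring.
      unfold Cminus at 1. eapply Rle_trans; [apply Cmod_triangle|]. rewrite Cmod_opp. lra. }
    rewrite Hea in *. pose proof (Cmod_ge_0 a). nra. }
  replace (a - h * / u)%C with (- (cexp a - 1 - a))%C.
  - rewrite Cmod_opp. pose proof (Cmod_ge_0 a). pose proof (Cmod_ge_0 h). nra.
  - change (h * / u)%C with (h / u)%C. rewrite <- Hea. ring.
Qed.

Lemma local_log (w0 : C) : w0 <> 0%C -> exists r, 0 < r /\ exists L : C -> C,
  forall w, Cmod (w - w0) < r -> cexp (L w) = w /\ ex_cdiff L w.
Proof.
  intro Hw0. pose proof (proj1 (Cmod_gt_0 w0) Hw0) as Hm0.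
  exists (Cmod w0 / 10000). split; [lra|].
  exists (fun w => Clog w0 + Clog (w * / w0))%C.
  intros w Hw.
  assert (Hq : Cmod (w * / w0 - 1) < 1/10000).
  { replace (w * / w0 - 1)%C with ((w - w0) * / w0)%C by (field; auto).
    rewrite Cmod_mult, Cmod_inv by auto.
    apply (Rmult_lt_reg_r (Cmod w0)); auto. rewrite Rmult_assoc, Rinv_l by lra. lra. }
  pose proof (Cmod_near_1 _ _ Hq).
  assert (Hnz : (w * / w0)%C <> 0%C) by (apply Cmod_gt_0; lra).
  split.
  - rewrite cexp_add, !cexp_Clog by auto. field. auto.
  - apply (@ex_filterdiff_plus_fct C_AbsRing C_NormedModule C_NormedModule _ _
             (fun _ => Clog w0) (fun w => Clog (w * / w0)%C)).
    + apply ex_filterdiff_const.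
    + apply (ex_filterdiff_comp' (fun w => (w * / w0)%C) Clog w).
      * exists (fun y => (y * / w0)%C). apply filterdiff_linear, is_linear_Cmult_r.
      * apply ex_cdiff_Clog; auto.
Qed.

(** * Holomorphic maps of C^2 *)

Lemma ex_filterdiff_C_AbsRing (U : NormedModule C_AbsRing) (f : U -> C) F :
  @ex_filterdiff C_AbsRing U C_NormedModule f F ->
  @ex_filterdiff C_AbsRing U (AbsRing_NormedModule C_AbsRing) f F.
Proof. intros [l [[Hp Hs Hn] Hd]]. exists l. repeat split; assumption. Qed.

Lemma ex_filterdiff_C_NormedModule (U : NormedModule C_AbsRing) (f : U -> C) F :
  @ex_filterdiff C_AbsRing U (AbsRing_NormedModule C_AbsRing) f F ->
  @ex_filterdiff C_AbsRing U C_NormedModule f F.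
Proof. intros [l [[Hp Hs Hn] Hd]]. exists l. repeat split; assumption. Qed.

Lemma holo_on_id (O : C2 -> Prop) : holo_on O (fun y => y).
Proof. intros x _. exists (fun y => y). apply filterdiff_id. Qed.

Lemma holo_on_subset (O1 O2 : C2 -> Prop) g :
  (forall y, O2 y -> O1 y) -> holo_on O1 g -> holo_on O2 g.
Proof. intros HO H x Hx. apply H, HO, Hx. Qed.

Lemma holo_on_chart (L P : C -> C) (O : C -> Prop) :
  (forall u, O u -> ex_cdiff L u) -> (forall v, ex_cdiff P v) ->
  holo_on (fun y => O (snd y))
    (fun y => ((fst y * cexp (P (L (snd y))))%C, cexp (- L (snd y)))).
Proof.
  intros HL HP x Hx.
  assert (Hsnd : @ex_filterdiff C_AbsRing C2_NM C_NormedModule snd (locally x)).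
  { exists (fun y : C2_NM => snd y). apply filterdiff_linear, is_linear_snd. }
  assert (Hfst : @ex_filterdiff C_AbsRing C2_NM C_NormedModule fst (locally x)).
  { exists (fun y : C2_NM => fst y). apply filterdiff_linear, is_linear_fst. }
  assert (HLs : @ex_filterdiff C_AbsRing C2_NM C_NormedModule (fun y => L (snd y)) (locally x))
    by exact (ex_filterdiff_comp' snd L x Hsnd (HL _ Hx)).
  assert (HE1 : @ex_filterdiff C_AbsRing C2_NM C_NormedModule
                  (fun y => cexp (P (L (snd y)))) (locally x)).
  { apply (ex_filterdiff_comp' (fun y : C2_NM => P (L (snd y))) cexp x); [|apply ex_cdiff_cexp].
    exact (ex_filterdiff_comp' _ P x HLs (HP _)). }
  assert (Hc1 : @ex_filterdiff C_AbsRing C2_NM C_NormedModule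
                  (fun y => (fst y * cexp (P (L (snd y))))%C) (locally x)).
  { apply ex_filterdiff_C_NormedModule.
    exact (@ex_filterdiff_mult_fct C_AbsRing C2_NM fst (fun y => cexp (P (L (snd y)))) x
             Cmult_comm (ex_filterdiff_C_AbsRing _ _ _ Hfst) (ex_filterdiff_C_AbsRing _ _ _ HE1)). }
  assert (Hc2 : @ex_filterdiff C_AbsRing C2_NM C_NormedModule
                  (fun y => cexp (- L (snd y))) (locally x)).
  { apply (ex_filterdiff_comp' (fun y : C2_NM => (- L (snd y))%C) cexp x); [|apply ex_cdiff_cexp].
    exact (@ex_filterdiff_opp_fct C_AbsRing C2_NM C_NormedModule (locally x) _ _ HLs). }
  assert (Hpair : forall z : C2_NM,
             @ex_filterdiff C_AbsRing C2_NM C2_NM (fun t : C2_NM => (fst t, snd t)) (locally z)).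
  { intro z. apply (@ex_filterdiff_ext C_AbsRing C2_NM C2_NM (locally z) _ (fun t => t)).
    - intros [? ?]; reflexivity.
    - apply ex_filterdiff_id. }
  exact (@ex_filterdiff_comp'_2 C_AbsRing C2_NM C_NormedModule C_NormedModule C2_NM
           _ _ (fun a b => (a, b)) x Hc1 Hc2 (Hpair _)).
Qed.

Lemma holo_on_fst_nbhd (O : C2 -> Prop) (A : C -> Prop) g x : holo_on O g -> O x ->
  (exists e, 0 < e /\ forall u, Cmod (u - fst (g x)) < e -> A u) ->
  exists d, 0 < d /\ forall y, ball2 x d y -> A (fst (g y)).
Proof.
  intros Hg Hx [eps [Heps HA]].
  destruct (Hg x Hx) as [l Hl].
  assert (Hc : continuous g x)
    by (apply (@filterdiff_continuous C_AbsRing C2_NM C2_NM g x); exists l; exact Hl).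
  assert (HP : locally (g x) (fun z : C2_NM => norm (minus z (g x)) < eps)).
  { apply (@locally_le_locally_norm C_AbsRing C2_NM). exists (mkposreal _ Heps). auto. }
  destruct (@locally_norm_le_locally C_AbsRing C2_NM _ _ (Hc _ HP)) as [d Hd].
  exists (d / 2). pose proof (cond_pos d). split; [lra|].
  intros y [Hy1 Hy2]. apply HA.
  assert (Hn : norm (minus y x) < d).
  { change (sqrt (Cmod (fst y - fst x) ^ 2 + Cmod (snd y - snd x) ^ 2) < d).
    pose proof (Cmod_ge_0 (fst y - fst x)). pose proof (Cmod_ge_0 (snd y - snd x)).
    set (a := Cmod (fst y - fst x)) in *. set (b := Cmod (snd y - snd x)) in *.
    assert (sqrt (a ^ 2 + b ^ 2) <= a + b).
    { rewrite <- (sqrt_Rsqr (a + b)) by lra. apply sqrt_le_1_alt. unfold Rsqr.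
      pose proof (Rmult_le_pos a b ltac:(lra) ltac:(lra)). nra. }
    lra. }
  eapply Rle_lt_trans; [|apply (Hd y Hn)].
  change (Cmod (fst (g y) - fst (g x))) with (norm (fst (minus (g y) (g x)))).
  apply norm_le_prod_norm_1.
Qed.

Lemma ball2_le (z : C2) (e e' : R) y : e <= e' -> ball2 z e y -> ball2 z e' y.
Proof. intros He [H1 H2]. split; lra. Qed.

Lemma geqv_step (G : gluing) p q : gdom G p -> gdom G q -> grel G p q -> geqv G p q.
Proof. intros. apply rst_step. auto. Qed.

Lemma annulus_neq0 a b (w : C) : 0 <= a -> annulus a b w -> w <> 0%C.
Proof. intros Ha [H1 H2]. apply Cmod_gt_0. lra. Qed.

Lemma annulus_inv a b (w : C) : 0 < a -> annulus a b w -> annulus (/ b) (/ a) (/ w)%C.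
Proof.
  intros Ha [H1 H2]. assert (w <> 0%C) by (apply Cmod_gt_0; lra).
  unfold annulus. rewrite Cmod_inv by auto. split; apply Rinv_lt_contravar; nra.
Qed.

Lemma annulus_nbhd a b (x : C) : annulus a b x ->
  exists e, 0 < e /\ forall y, Cmod (y - x) < e -> annulus a b y.
Proof.
  intros [H1 H2]. exists (Rmin (Cmod x - a) (b - Cmod x)).
  pose proof (Rmin_l (Cmod x - a) (b - Cmod x)). pose proof (Rmin_r (Cmod x - a) (b - Cmod x)).
  split; [apply Rmin_glb_lt; lra|].
  intros y Hy. pose proof (Cmod_sub_ge y x) as Hd. apply Rabs_le_between in Hd. split; lra.
Qed.

Lemma disk_nbhd a (x : C) : disk a x ->
  exists e, 0 < e /\ forall y, Cmod (y - x) < e -> disk a y.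
Proof.
  intro H. exists (a - Cmod x). unfold disk in *. split; [lra|].
  intros y Hy. pose proof (Cmod_sub_ge y x) as Hd. apply Rabs_le_between in Hd. lra.
Qed.

Lemma product_nbhd (A B : C -> Prop) (z : C2) :
  (exists e, 0 < e /\ forall y, Cmod (y - fst z) < e -> A y) ->
  (exists e, 0 < e /\ forall y, Cmod (y - snd z) < e -> B y) ->
  exists e, 0 < e /\ forall y, ball2 z e y -> A (fst y) /\ B (snd y).
Proof.
  intros [e1 [He1 HA]] [e2 [He2 HB]]. exists (Rmin e1 e2).
  pose proof (Rmin_l e1 e2). pose proof (Rmin_r e1 e2).
  split; [apply Rmin_glb_lt; lra|]. intros y [Hy1 Hy2]. split; [apply HA | apply HB]; lra.
Qed.


(** * The map Phi and the deck transformations *)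

Definition Phi_map (z : C2) : C2 := ((fst z * cexp (phase (Clog (/ snd z))))%C, (/ snd z)%C).

Lemma Phi_rel_Phi_map (z : C2) : snd z <> 0%C -> Phi_rel z (Phi_map z).
Proof.
  intro Hz. split; [reflexivity|]. exists (Clog (/ snd z)). split; [|reflexivity].
  apply cexp_Clog, Cinv_neq0, Hz.
Qed.

Lemma Phi_rel_common_branch (z z' w w' : C2) :
  Phi_rel z w -> Phi_rel z' w' -> snd w = snd w' ->
  exists (L : C) (k : Z), cexp L = snd w /\
    fst w = (fst z * cexp (phase L))%C /\
    fst w' = (fst z' * cexp (phase L) * cexp (IZR k * L))%C.
Proof.
  intros [_ [L [HL Hw]]] [_ [L' [HL' Hw']]] E.
  destruct (cexp_eq_period L L') as [k ->]; [congruence|].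
  exists L, k. split; [|split]; auto.
  change (fst w' = fst z' * cexp (phase (L + period k)))%C in Hw'.
  rewrite Hw', cexp_phase_period. ring.
Qed.

Lemma Phi_rel_shift (z : C2) (w1 w2 : C) :
  Phi_rel z (w1, w2) -> Phi_rel z ((w1 * w2)%C, w2).
Proof.
  intros [H2 [L [HL H1]]]. split; auto.
  exists (L + period 1)%C. simpl in *. split.
  - rewrite cexp_add, cexp_period, HL. apply Cmult_1_r.
  - change (w1 * w2 = fst z * cexp (phase (L + period 1)))%C.
    rewrite cexp_phase_period, H1, <- HL. replace (RtoC (IZR 1) * L)%C with L by ring.
    unfold phase. ring.
Qed.

Lemma Phi_rel_unshift (z : C2) (w1 w2 : C) : w2 <> 0%C ->
  Phi_rel z ((w1 * w2)%C, w2) -> Phi_rel z (w1, w2).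
Proof.
  intros Hnz [H2 [L [HL H1]]]. split; auto.
  exists (L + period (-1))%C. simpl in *. split.
  - rewrite cexp_add, cexp_period, HL. apply Cmult_1_r.
  - change (w1 = fst z * cexp (phase (L + period (-1))))%C.
    rewrite cexp_phase_period.
    replace (RtoC (IZR (-1)) * L)%C with (- L)%C
      by (change (IZR (-1)) with (- (1))%R; rewrite RtoC_opp; ring).
    rewrite cexp_opp, HL, Cmult_assoc. unfold phase. rewrite <- H1. field. auto.
Qed.

Lemma Phi_rel_shifted_preimage (w1 w2 L : C) (k : Z) : w2 <> 0%C -> cexp L = w2 ->
  Phi_rel ((w1 * cexp (- phase L - IZR k * L))%C, (/ w2)%C) (w1, w2).
Proof.
  intros Hnz HL. split; simpl.
  - symmetry; apply Cinv_involutive, Hnz.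
  - exists (L + period k)%C. split.
    + rewrite cexp_add, cexp_period, HL. ring.
    + change (w1 = w1 * cexp (- phase L - IZR k * L) * cexp (phase (L + period k)))%C.
      rewrite cexp_phase_period, <- Cmult_assoc, <- !cexp_add.
      replace (- phase L - IZR k * L + (phase L + IZR k * L))%C with (RtoC 0) by ring.
      rewrite cexp_0. ring.
Qed.

Lemma shift_exponent_lt_2 (a b x r s : R) (k : Z) :
  1 < a -> b < s -> exp x < r -> r < 1 -> s * (r * r) < 1 ->
  a = b * exp (IZR k * x) -> (k < 2)%Z.
Proof.
  intros Ha Hb Hx Hr Hsr E. destruct (Z_lt_le_dec k 2) as [|Hk]; [assumption|exfalso].
  apply IZR_le in Hk.
  pose proof (exp_pos x). assert (Hneg : x < 0) by (rewrite <- exp_0 in Hr; apply exp_lt_inv; lra).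
  assert (exp (IZR k * x) <= exp x * exp x).
  { rewrite <- exp_plus. destruct (Req_dec (IZR k * x) (x + x)) as [-> | Hne]; [lra|].
    left. apply exp_increasing. nra. }
  pose proof (exp_pos (IZR k * x)).
  assert (exp x * exp x < r * r) by nra.
  assert (0 < b) by (apply (Rmult_lt_reg_r (exp (IZR k * x))); lra).
  assert (b * exp (IZR k * x) < s * (r * r)) by nra.
  lra.
Qed.

Lemma shift_exponent_bound (a b x r s : R) (k : Z) :
  1 < a < s -> 1 < b < s -> exp x < r -> r < 1 -> s * (r * r) < 1 ->
  a = b * exp (IZR k * x) -> (-1 <= k <= 1)%Z.
Proof.
  intros Ha Hb Hx Hr Hsr E.
  assert (E' : b = a * exp (IZR (- k) * x)).
  { rewrite E, opp_IZR, Rmult_assoc, <- exp_plus.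
    replace (IZR k * x + - IZR k * x) with 0 by ring. rewrite exp_0. ring. }
  pose proof (shift_exponent_lt_2 a b x r s k ltac:(lra) ltac:(lra) Hx Hr Hsr E).
  pose proof (shift_exponent_lt_2 b a x r s (- k) ltac:(lra) ltac:(lra) Hx Hr Hsr E').
  lia.
Qed.

Lemma exists_shift_in_annulus (m a s : R) : 0 < m -> 0 < a -> 0 < s -> a < ln s ->
  exists k : Z, 1 < m * exp (IZR k * a) < s.
Proof.
  intros Hm Ha Hs Has.
  destruct (archimed (- ln m / a)) as [Hu1 Hu2].
  exists (up (- ln m / a)). set (k := IZR (up (- ln m / a))) in *.
  assert (Hk1 : - ln m < k * a).
  { apply (Rmult_lt_compat_r a) in Hu1; auto. unfold Rdiv in Hu1.
    rewrite Rmult_assoc, Rinv_l, Rmult_1_r in Hu1; lra. }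
  assert (Hk2 : k * a <= - ln m + a).
  { assert (Hk : k - 1 <= - ln m / a) by lra.
    apply (Rmult_le_compat_r a) in Hk; [|lra]. unfold Rdiv in Hk.
    rewrite Rmult_assoc, Rinv_l, Rmult_1_r in Hk; lra. }
  rewrite <- (exp_ln m), <- exp_plus by auto. split.
  - rewrite <- exp_0. apply exp_increasing. lra.
  - rewrite <- (exp_ln s) by auto. apply exp_increasing. lra.
Qed.

(** * The biholomorphism *)

Definition glued_holo_at (G1 G2 : gluing) (F : nat * C2 -> nat * C2) (p : nat * C2) : Prop :=
  exists (e : R) (j : nat) (g : C2 -> C2),
    0 < e /\ holo_on (ball2 (snd p) e) g /\
    forall y, ball2 (snd p) e y -> gdom G1 (fst p, y) ->
      gdom G2 (j, g y) /\ geqv G2 (F (fst p, y)) (j, g y).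

Section Y_and_E0.

Variables r0 r1 r2 s : R.
Hypothesis r0_pos : 0 < r0.
Hypothesis r0_lt_r1 : r0 < r1.
Hypothesis r1_lt_1 : r1 < 1.
Hypothesis r2_le_s : r2 <= s.
Hypothesis inv_r0_lt_s : / r0 < s.
Hypothesis s_r1_r1_lt_1 : s * (r1 * r1) < 1.

Local Notation Y := (Y_gluing r0 r1 r2 s).
Local Notation E := (E0_gluing r0 r1 r2).

Let inv_r1_pos : 0 < / r1.
Proof. apply Rinv_0_lt_compat; lra. Qed.

Let one_lt_s : 1 < s.
Proof.
  enough (1 < / r0) by lra.
  rewrite <- Rinv_1. apply Rinv_lt_contravar; lra.
Qed.

Lemma V'_fst_neq0 z : V' r0 r1 s z -> fst z <> 0%C.
Proof. intros [H _]. apply (annulus_neq0 1 s); [lra | exact H]. Qed.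

Lemma V'_snd_neq0 z : V' r0 r1 s z -> snd z <> 0%C.
Proof. intros [_ H]. apply (annulus_neq0 (/ r1) (/ r0)); [lra | exact H]. Qed.

Lemma annulus_inv_V'_snd z : V' r0 r1 s z -> annulus r0 r1 (/ snd z)%C.
Proof.
  intros [_ H]. rewrite <- (Rinv_inv r0), <- (Rinv_inv r1). exact (annulus_inv _ _ _ inv_r1_pos H).
Qed.

Lemma Wchart_of_Phi_rel z w : V' r0 r1 s z -> Phi_rel z w -> Wchart r0 r1 w.
Proof.
  intros Hz [Hw2 [L [_ Hw1]]]. split.
  - rewrite Hw1. apply Cmult_neq_0; [apply V'_fst_neq0, Hz | apply cexp_neq0].
  - rewrite Hw2. apply annulus_inv_V'_snd, Hz.
Qed.

Lemma E_shift_equiv (w1 w2 : C) : w1 <> 0%C -> annulus r0 r1 w2 ->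
  geqv E (1%nat, (w1, w2)) (1%nat, ((w1 * w2)%C, w2)).
Proof.
  intros Hw1 Hw2. pose proof (annulus_neq0 r0 r1 w2 ltac:(lra) Hw2).
  apply geqv_step; simpl.
  - right. split; [reflexivity | split; auto].
  - right. split; [reflexivity | split; auto]. apply Cmult_neq_0; auto.
  - left. repeat split.
Qed.

Lemma E_shift_pow_nat_equiv (w1 w2 L : C) (n : nat) : w1 <> 0%C -> annulus r0 r1 w2 ->
  cexp L = w2 -> geqv E (1%nat, (w1, w2)) (1%nat, ((w1 * cexp (INR n * L))%C, w2)).
Proof.
  intros Hw1 Hw2 HL. induction n as [|n IH].
  - replace (RtoC (INR 0) * L)%C with (RtoC 0) by (simpl; ring).
    rewrite cexp_0, Cmult_1_r. apply rst_refl.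
  - eapply rst_trans; [exact IH|].
    replace (w1 * cexp (INR (S n) * L))%C with (w1 * cexp (INR n * L) * w2)%C.
    + apply E_shift_equiv; auto. apply Cmult_neq_0; auto. apply cexp_neq0.
    + rewrite S_INR, RtoC_plus, <- HL, <- Cmult_assoc, <- cexp_add. f_equal. f_equal. ring.
Qed.

Lemma E_shift_pow_equiv (w1 w2 L : C) (k : Z) : w1 <> 0%C -> annulus r0 r1 w2 ->
  cexp L = w2 -> geqv E (1%nat, (w1, w2)) (1%nat, ((w1 * cexp (IZR k * L))%C, w2)).
Proof.
  intros Hw1 Hw2 HL. destruct (Z_le_gt_dec 0 k) as [Hk|Hk].
  - rewrite <- (Z2Nat.id k Hk), <- INR_IZR_INZ. apply E_shift_pow_nat_equiv; auto.
  - set (n := Z.to_nat (- k)).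
    assert (Ek : RtoC (IZR k) = (- INR n)%C).
    { unfold n. rewrite INR_IZR_INZ, Z2Nat.id, opp_IZR by lia.
      rewrite <- RtoC_opp, Ropp_involutive. reflexivity. }
    set (w1' := (w1 * cexp (IZR k * L))%C).
    assert (Hw1' : w1' <> 0%C) by (apply Cmult_neq_0; auto; apply cexp_neq0).
    apply rst_sym. replace w1 with (w1' * cexp (INR n * L))%C.
    + apply E_shift_pow_nat_equiv; auto.
    + unfold w1'. rewrite <- Cmult_assoc, <- cexp_add, Ek.
      replace (- INR n * L + INR n * L)%C with (RtoC 0) by ring. rewrite cexp_0. ring.
Qed.

Lemma E_equiv_of_Phi_rel z w w' : Phi_rel z w -> Phi_rel z w' -> Wchart r0 r1 w ->
  geqv E (1%nat, w) (1%nat, w').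
Proof.
  intros HP HP' [Hw1 Hw2].
  assert (E2 : snd w = snd w') by (rewrite (proj1 HP), (proj1 HP'); reflexivity).
  destruct (Phi_rel_common_branch z z w w' HP HP' E2) as [L [k [HL [E1 E1']]]].
  destruct w as [w1 w2], w' as [w1' w2']. simpl in *. subst w2'.
  rewrite E1', <- E1. apply E_shift_pow_equiv; auto.
Qed.

Definition Fmap (p : nat * C2) : nat * C2 :=
  if excluded_middle_informative (V r0 r2 (snd p)) then (0%nat, snd p)
  else (1%nat, Phi_map (snd p)).

Lemma Fmap_V z : V r0 r2 z -> Fmap (0%nat, z) = (0%nat, z).
Proof.
  intro Hz. unfold Fmap; simpl. destruct (excluded_middle_informative _); [reflexivity | contradiction].
Qed.

Lemma Uset_V' z : Uset r0 r1 r2 z -> V' r0 r1 s z.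
Proof. intros [[H1 H2] H3]. split; [split|]; auto; lra. Qed.

Lemma Fmap_equiv_of_Phi_rel z w : V' r0 r1 s z -> Wchart r0 r1 w -> Phi_rel z w ->
  geqv E (Fmap (0%nat, z)) (1%nat, w).
Proof.
  intros Hz Hw HP. unfold Fmap; simpl.
  destruct (excluded_middle_informative (V r0 r2 z)) as [Hv|Hv].
  - apply geqv_step; simpl.
    + left; auto.
    + right; auto.
    + right. split; [reflexivity|]. split; [reflexivity|].
      exact (conj (conj (proj1 Hv) (proj2 Hz)) HP).
  - apply (E_equiv_of_Phi_rel z); auto.
    + apply Phi_rel_Phi_map, V'_snd_neq0, Hz.
    + apply (Wchart_of_Phi_rel z); auto. apply Phi_rel_Phi_map, V'_snd_neq0, Hz.
Qed.

Lemma Y_psi_equiv z z' : V' r0 r1 s z -> V' r0 r1 s z' -> snd z = snd z' ->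
  fst z = (fst z' / snd z')%C -> geqv Y (0%nat, z') (0%nat, z).
Proof.
  intros Hz Hz' E2 E1. pose proof (V'_snd_neq0 z' Hz') as Hnz.
  pose proof (proj1 (Cmod_gt_0 _) Hnz).
  assert (HU : Cmod (snd z') < Cmod (fst z')).
  { destruct Hz as [[Ha _] _]. rewrite E1, Cmod_div in Ha by auto.
    apply (Rmult_lt_compat_r (Cmod (snd z'))) in Ha; auto.
    unfold Rdiv in Ha. rewrite Rmult_assoc, Rinv_l, Rmult_1_r, Rmult_1_l in Ha; lra. }
  apply geqv_step; simpl.
  - split; auto.
  - split; auto.
  - repeat split; auto; try apply Hz'; try apply Hz.
    destruct z as [a b], z' as [a' b']; simpl in *. subst. reflexivity.
Qed.

(* Here [s r1^2 < 1] forces [|k| <= 1], and [k = +-1] is the gluing [psi]. *)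
Lemma Y_equiv_of_shift z z' (L : C) (k : Z) : V' r0 r1 s z -> V' r0 r1 s z' ->
  snd z = snd z' -> cexp L = (/ snd z)%C -> fst z = (fst z' * cexp (IZR k * L))%C ->
  geqv Y (0%nat, z) (0%nat, z').
Proof.
  intros Hz Hz' E2 HL E1.
  assert (Hk : (-1 <= k <= 1)%Z).
  { apply (shift_exponent_bound (Cmod (fst z)) (Cmod (fst z')) (Re L) r1 s); auto;
      try apply Hz; try apply Hz'.
    - rewrite <- Cmod_cexp, HL. apply annulus_inv_V'_snd, Hz.
    - rewrite E1, Cmod_mult, Cmod_cexp, re_scal_l. reflexivity. }
  assert (Hk' : k = (-1)%Z \/ k = 0%Z \/ k = 1%Z) by lia.
  destruct Hk' as [-> | [-> | ->]].
  - pose proof (V'_snd_neq0 z Hz).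
    apply Y_psi_equiv; auto. rewrite E1.
    replace (RtoC (IZR (-1)) * L)%C with (- L)%C
      by (change (IZR (-1)) with (- (1))%R; rewrite RtoC_opp; ring).
    rewrite cexp_opp, HL, Cinv_involutive by auto. field. auto.
  - replace z with z'; [apply rst_refl|].
    destruct z as [a b], z' as [a' b']; simpl in *. rewrite E1, E2.
    replace (RtoC (IZR 0) * L)%C with (RtoC 0) by (simpl; ring). rewrite cexp_0, Cmult_1_r.
    reflexivity.
  - apply rst_sym, Y_psi_equiv; auto. rewrite E1, <- E2.
    replace (RtoC (IZR 1) * L)%C with L by (simpl; ring). rewrite HL. reflexivity.
Qed.

Lemma Y_equiv_of_Phi_rel z z' w : V' r0 r1 s z -> V' r0 r1 s z' ->
  Phi_rel z w -> Phi_rel z' w -> geqv Y (0%nat, z) (0%nat, z').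
Proof.
  intros Hz Hz' HP HP'.
  destruct (Phi_rel_common_branch z z' w w HP HP' eq_refl) as [L [k [HL [E1 E1']]]].
  pose proof (V'_snd_neq0 z Hz). pose proof (V'_snd_neq0 z' Hz').
  assert (E2 : snd z = snd z').
  { rewrite <- (Cinv_involutive (snd z)), <- (Cinv_involutive (snd z')) by auto.
    rewrite <- (proj1 HP), <- (proj1 HP'). reflexivity. }
  apply (Y_equiv_of_shift z z' L k); auto.
  - rewrite HL. apply (proj1 HP).
  - pose proof (cexp_neq0 (phase L)).
    replace (fst z) with (fst z * cexp (phase L) / cexp (phase L))%C by (field; auto).
    rewrite <- E1, E1'. field. auto.
Qed.

(* [p] is a point of [Y] lying over [q]. This relation inverts [Fmap], and its
   invariance under the equivalence of [E] ([Ylift_class_equiv]) makes [Fmap]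
   injective on classes. *)
Definition Ylift (q p : nat * C2) : Prop :=
  (fst q = 0%nat /\ p = q) \/
  (fst q = 1%nat /\ exists z, p = (0%nat, z) /\ V' r0 r1 s z /\ Phi_rel z (snd q)).

Definition Ylift_class (q p : nat * C2) : Prop := exists p0, Ylift q p0 /\ geqv Y p p0.

Lemma Ylift_unique q p0 p1 : Ylift q p0 -> Ylift q p1 -> geqv Y p0 p1.
Proof.
  intros [[Hq ->] | [Hq [z [-> [Hz HP]]]]] [[Hq' ->] | [Hq' [z' [-> [Hz' HP']]]]];
    try congruence.
  - apply rst_refl.
  - apply (Y_equiv_of_Phi_rel z z' (snd q)); auto.
Qed.

Lemma Ylift_class_step q q' : gdom E q -> gdom E q' -> grel E q q' ->
  forall p, Ylift_class q p <-> Ylift_class q' p.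
Proof.
  intros Dq Dq' Rqq' p. destruct q as [t [w1 w2]], q' as [t' w'].
  destruct Rqq' as [(Et & Et' & E2 & E1) | (Et & Et' & HU & HP)]; simpl in *; subst t t'.
  - destruct w' as [w1' w2']. simpl in *. subst w1' w2'.
    assert (Hnz : w2 <> 0%C).
    { destruct Dq as [[? _] | [_ [_ Ha]]]; [discriminate|]. apply (annulus_neq0 r0 r1); auto; lra. }
    split; intros [p0 [[[? _] | [_ [z [E0 [Hz HP]]]]] Hp]]; try discriminate;
      exists p0; (split; [right; split; [reflexivity|]; exists z; split; [exact E0|] | exact Hp]).
    + split; [exact Hz|]. apply Phi_rel_shift, HP.
    + split; [exact Hz|]. apply Phi_rel_unshift; auto.
  - split.
    + intros [p0 [[[_ ->] | [? _]] Hp]]; [|discriminate].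
      exists (0%nat, (w1, w2)). split; auto. right. split; auto.
      exists (w1, w2). split; [reflexivity | split; [apply Uset_V'|]]; auto.
    + intros [p0 [[[? _] | [_ [z [-> [Hz HP']]]]] Hp]]; [discriminate|].
      exists (0%nat, (w1, w2)). split; [left; auto|].
      eapply rst_trans; [exact Hp|].
      apply (Y_equiv_of_Phi_rel z (w1, w2) w'); auto. apply Uset_V'; auto.
Qed.

Lemma Ylift_class_equiv q q' : geqv E q q' -> forall p, Ylift_class q p <-> Ylift_class q' p.
Proof.
  induction 1 as [x y [Dx [Dy Rxy]] | x | x y _ IH | x y z _ IH1 _ IH2]; intro p.
  - apply Ylift_class_step; auto.
  - reflexivity.
  - symmetry. apply IH.
  - rewrite IH1. apply IH2.
Qed.

Lemma Fmap_dom p : gdom Y p -> gdom E (Fmap p).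
Proof.
  intros [Ep Hp]. unfold Fmap. destruct (excluded_middle_informative (V r0 r2 (snd p))).
  - left. split; auto.
  - right. split; [reflexivity|]. destruct Hp as [Hp|Hp]; [contradiction|].
    apply (Wchart_of_Phi_rel (snd p)); auto. apply Phi_rel_Phi_map, V'_snd_neq0, Hp.
Qed.

Lemma Ylift_Fmap p : gdom Y p -> Ylift (Fmap p) p.
Proof.
  destruct p as [t z]. intros [Ep Hp]. simpl in *. subst t.
  unfold Fmap. simpl. destruct (excluded_middle_informative (V r0 r2 z)).
  - left. split; reflexivity.
  - right. split; [reflexivity|]. destruct Hp as [Hp|Hp]; [contradiction|].
    exists z. split; [reflexivity | split; [exact Hp|]]. apply Phi_rel_Phi_map, V'_snd_neq0, Hp.
Qed.

Lemma Fmap_reflects_equiv p p' : gdom Y p -> gdom Y p' ->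
  geqv E (Fmap p) (Fmap p') -> geqv Y p p'.
Proof.
  intros Dp Dp' He.
  assert (Hs : Ylift_class (Fmap p) p) by (exists p; split; [apply Ylift_Fmap, Dp | apply rst_refl]).
  apply (Ylift_class_equiv _ _ He) in Hs. destruct Hs as [p0 [HA Hp]].
  eapply rst_trans; [exact Hp|]. apply (Ylift_unique (Fmap p')); auto. apply Ylift_Fmap, Dp'.
Qed.

Lemma Fmap_preserves_equiv p p' : geqv Y p p' -> geqv E (Fmap p) (Fmap p').
Proof.
  induction 1 as [x y [Dx [Dy Rxy]] | x | x y _ IH | x y z _ IH1 _ IH2].
  - destruct x as [tx z], y as [ty z'].
    destruct Rxy as (Ex & Ey & [Hz HU] & Hz' & Ez'). simpl in *. subst tx ty.
    pose proof (Phi_rel_Phi_map z (V'_snd_neq0 z Hz)) as HP.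
    pose proof (Wchart_of_Phi_rel z _ Hz HP) as HW.
    eapply rst_trans; [apply (Fmap_equiv_of_Phi_rel z (Phi_map z)); auto|].
    destruct (Phi_map z) as [w1 w2] eqn:Ew. destruct HW as [Hw1 Hw2].
    eapply rst_trans; [apply E_shift_equiv; auto|].
    apply rst_sym, (Fmap_equiv_of_Phi_rel z'); auto.
    + apply (Wchart_of_Phi_rel z); auto. apply Phi_rel_shift, HP.
    + destruct HP as [HP2 [L [HL HP1]]]. simpl in *. rewrite Ez'. split; simpl; [exact HP2|].
      exists L. split; auto. rewrite HP1, HP2. unfold Cdiv. ring.
  - apply rst_refl.
  - apply rst_sym, IH.
  - eapply rst_trans; eauto.
Qed.

Lemma exists_shift_V' (w : C2) (L : C) : Wchart r0 r1 w -> cexp L = snd w ->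
  exists k : Z, annulus 1 s (fst w * cexp (- phase L - IZR k * L))%C.
Proof.
  intros [Hw1 [Ha1 Ha2]] HL.
  assert (HreL : exp (Re L) = Cmod (snd w)) by (rewrite <- Cmod_cexp, HL; reflexivity).
  assert (HneL : 0 < - Re L).
  { enough (Re L < 0) by lra. apply exp_lt_inv. rewrite exp_0. lra. }
  assert (Hlns : - Re L < ln s).
  { rewrite <- (ln_exp (- Re L)). apply ln_increasing; [apply exp_pos|].
    rewrite exp_Ropp, HreL. apply Rlt_trans with (/ r0); [apply Rinv_lt_contravar; nra | lra]. }
  assert (Hm : 0 < Cmod (fst w) * exp (- Re (phase L)))
    by (apply Rmult_lt_0_compat; [apply Cmod_gt_0, Hw1 | apply exp_pos]).
  destruct (exists_shift_in_annulus _ _ s Hm HneL ltac:(lra) Hlns) as [k Hk].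
  exists k. unfold annulus. rewrite Cmod_mult, Cmod_cexp.
  replace (Re (- phase L - IZR k * L)%C) with (- Re (phase L) + IZR k * (- Re L)).
  - rewrite exp_plus, <- Rmult_assoc. exact Hk.
  - unfold Cminus. rewrite re_plus, !re_opp, re_scal_l. ring.
Qed.

Lemma Fmap_surj q : gdom E q -> exists p, gdom Y p /\ geqv E (Fmap p) q.
Proof.
  intros [[Eq Hq] | [Eq Hq]]; destruct q as [t w]; simpl in *; subst t.
  - exists (0%nat, w). split; [split; auto|]. rewrite Fmap_V by exact Hq. apply rst_refl.
  - destruct w as [w1 w2]. pose proof (annulus_neq0 r0 r1 w2 ltac:(lra) (proj2 Hq)) as Hnz.
    destruct (exists_shift_V' (w1, w2) (Clog w2) Hq (cexp_Clog w2 Hnz)) as [k Hk].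
    set (z := ((w1 * cexp (- phase (Clog w2) - IZR k * Clog w2))%C, (/ w2)%C)).
    assert (Hz : V' r0 r1 s z) by (split; [exact Hk | apply annulus_inv; [lra | apply Hq]]).
    exists (0%nat, z). split; [split; auto|].
    apply Fmap_equiv_of_Phi_rel; auto. apply Phi_rel_shifted_preimage; auto. apply cexp_Clog, Hnz.
Qed.

Definition Hmap (q : nat * C2) : nat * C2 :=
  epsilon (inhabits q) (fun p => gdom Y p /\ geqv E (Fmap p) q).

Lemma Hmap_spec q : gdom E q -> gdom Y (Hmap q) /\ geqv E (Fmap (Hmap q)) q.
Proof. intro Dq. unfold Hmap. apply epsilon_spec, Fmap_surj, Dq. Qed.

Lemma Hmap_equiv q p : gdom E q -> gdom Y p -> geqv E (Fmap p) q -> geqv Y (Hmap q) p.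
Proof.
  intros Dq Dp Hpq. destruct (Hmap_spec q Dq) as [Dh Eh].
  apply Fmap_reflects_equiv; auto. eapply rst_trans; [exact Eh | apply rst_sym, Hpq].
Qed.

Lemma V_nbhd z : V r0 r2 z -> exists e, 0 < e /\ forall y, ball2 z e y -> V r0 r2 y.
Proof. intros [H1 H2]. apply product_nbhd; [apply annulus_nbhd | apply disk_nbhd]; auto. Qed.

Lemma V'_nbhd z : V' r0 r1 s z -> exists e, 0 < e /\ forall y, ball2 z e y -> V' r0 r1 s y.
Proof. intros [H1 H2]. apply product_nbhd; apply annulus_nbhd; auto. Qed.

Lemma Fmap_holo_at_V z : V r0 r2 z -> glued_holo_at Y E Fmap (0%nat, z).
Proof.
  intro Hz. destruct (V_nbhd z Hz) as [e [He HV]].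
  exists e, 0%nat, (fun y => y). split; [exact He | split; [apply holo_on_id|]].
  intros y Hy _. simpl. rewrite Fmap_V by auto. split; [left; split; auto | apply rst_refl].
Qed.

Lemma Fmap_holo_at_V' z : V' r0 r1 s z -> glued_holo_at Y E Fmap (0%nat, z).
Proof.
  intro Hz.
  destruct (local_log (snd z) (V'_snd_neq0 z Hz)) as [r [Hr [L HL]]].
  destruct (V'_nbhd z Hz) as [e [He HV]].
  set (g := fun y : C2 => ((fst y * cexp (phase (- L (snd y))))%C, cexp (- L (snd y)))).
  pose proof (Rmin_l r e). pose proof (Rmin_r r e).
  exists (Rmin r e), 1%nat, g. split; [apply Rmin_glb_lt; auto|]. split.
  - apply (holo_on_subset (fun y => Cmod (snd y - snd z) < r)).
    + intros y [_ Hy]. simpl in Hy. lra.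
    + apply (holo_on_chart L (fun v => phase (- v)) (fun u => Cmod (u - snd z) < r)).
      * intros u Hu. apply HL, Hu.
      * apply ex_cdiff_phase_opp.
  - intros y Hy _. simpl. change (ball2 z (Rmin r e) y) in Hy.
    assert (Vy : V' r0 r1 s y) by (apply HV, (ball2_le _ (Rmin r e)); auto).
    destruct (HL (snd y)) as [HLy _]; [destruct Hy; lra|].
    assert (HP : Phi_rel y (g y)).
    { split; simpl; [rewrite cexp_opp, HLy; reflexivity|].
      exists (- L (snd y))%C. split; reflexivity. }
    pose proof (Wchart_of_Phi_rel y _ Vy HP).
    split; [right; split; auto | apply Fmap_equiv_of_Phi_rel; auto].
Qed.

Lemma Hmap_holo_at_V w : V r0 r2 w -> glued_holo_at E Y Hmap (0%nat, w).
Proof.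
  intro Hw. destruct (V_nbhd w Hw) as [e [He HV]].
  exists e, 0%nat, (fun y => y). split; [exact He | split; [apply holo_on_id|]].
  intros y Hy Dy. simpl in *.
  assert (DY : gdom Y (0%nat, y)) by (split; [reflexivity | left; apply HV, Hy]).
  split; [exact DY|]. apply Hmap_equiv; auto. rewrite Fmap_V by (apply HV, Hy). apply rst_refl.
Qed.

Lemma Hmap_holo_at_W w : Wchart r0 r1 w -> glued_holo_at E Y Hmap (1%nat, w).
Proof.
  intro Hw. destruct w as [w1 w2].
  pose proof (annulus_neq0 r0 r1 w2 ltac:(lra) (proj2 Hw)) as Hnz.
  destruct (local_log w2 Hnz) as [r [Hr [L HL]]].
  assert (Hw2 : Cmod (w2 - w2) < r) by (replace (w2 - w2)%C with (RtoC 0) by ring; rewrite Cmod_0; lra).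
  destruct (exists_shift_V' (w1, w2) (L w2) Hw (proj1 (HL w2 Hw2))) as [k Hk].
  set (g := fun y : C2 =>
              ((fst y * cexp (- phase (L (snd y)) - IZR k * L (snd y)))%C, cexp (- L (snd y)))).
  assert (Hg : holo_on (fun y => Cmod (snd y - w2) < r) g)
    by (apply (holo_on_chart L (fun v => - phase v - IZR k * v)%C (fun u => Cmod (u - w2) < r));
        [intros u Hu; apply HL, Hu | apply ex_cdiff_phase_shift]).
  destruct (holo_on_fst_nbhd _ (annulus 1 s) g (w1, w2) Hg Hw2 (annulus_nbhd _ _ _ Hk))
    as [e [He Hann]].
  pose proof (Rmin_l r e). pose proof (Rmin_r r e).
  exists (Rmin r e), 0%nat, g. split; [apply Rmin_glb_lt; auto|]. split.
  - refine (holo_on_subset _ _ g _ Hg). intros y [_ Hy]. simpl in Hy. lra.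
  - intros y Hy Dy. simpl in Dy |- *. change (ball2 (w1, w2) (Rmin r e) y) in Hy.
    destruct Dy as [[? _] | [_ Wy]]; [discriminate|].
    destruct (HL (snd y)) as [HLy _]; [destruct Hy; simpl in *; lra|].
    pose proof (annulus_neq0 r0 r1 (snd y) ltac:(lra) (proj2 Wy)).
    assert (Eg : g y = ((fst y * cexp (- phase (L (snd y)) - IZR k * L (snd y)))%C, (/ snd y)%C))
      by (unfold g; rewrite cexp_opp, HLy; reflexivity).
    assert (Vg : V' r0 r1 s (g y)).
    { split; [apply Hann, (ball2_le _ (Rmin r e)); auto|].
      rewrite Eg. apply annulus_inv; [lra | apply Wy]. }
    split; [split; [reflexivity | right; exact Vg]|].
    apply Hmap_equiv; [right; split; auto | split; [reflexivity | right; exact Vg] |].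
    apply Fmap_equiv_of_Phi_rel; auto. rewrite Eg.
    destruct y as [y1 y2]. apply Phi_rel_shifted_preimage; auto.
Qed.

Lemma Fmap_holo : glued_holo Y E Fmap.
Proof.
  intros [t z] [Ht Hz]. simpl in Ht. subst t.
  destruct (excluded_middle_informative (V r0 r2 z)) as [Hv | Hv].
  - apply Fmap_holo_at_V, Hv.
  - apply Fmap_holo_at_V'. destruct Hz; [contradiction | assumption].
Qed.

Lemma Hmap_holo : glued_holo E Y Hmap.
Proof.
  intros [t w] [[Ht Hw] | [Ht Hw]]; simpl in Ht; subst t.
  - apply Hmap_holo_at_V, Hw.
  - apply Hmap_holo_at_W, Hw.
Qed.

Theorem Y_biholomorphic_E0 : biholomorphic Y E.
Proof.
  exists Fmap, Hmap. split; [|split; [|split; [|split; [|split; [|split; [|split]]]]]].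
  - exact Fmap_dom.
  - intros q Dq. apply (Hmap_spec q Dq).
  - intros p p' _ _. apply Fmap_preserves_equiv.
  - intros q q' Dq Dq' Hqq'. apply Hmap_equiv; [exact Dq | apply (Hmap_spec q' Dq') |].
    eapply rst_trans; [apply (Hmap_spec q' Dq') | apply rst_sym, Hqq'].
  - intros p Dp. apply Hmap_equiv; [apply Fmap_dom, Dp | exact Dp | apply rst_refl].
  - intros q Dq. apply (Hmap_spec q Dq).
  - exact Fmap_holo.
  - exact Hmap_holo.
Qed.

End Y_and_E0.

Theorem proposition2p1 (r0 r1 r2 s : R) :
  0 < r0 -> 0 < r1 -> 0 < r2 ->
  1 < r2 -> r2 < / r1 ->
  r1 / r2 < r0 -> r0 < r1 ->
  / r0 < s -> s < r2 / r1 ->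
  biholomorphic (Y_gluing r0 r1 r2 s) (E0_gluing r0 r1 r2).
Proof.
  intros Hr0 Hr1 _ Hr2_gt_1 Hr2_lt _ Hr01 Hr0s Hs_lt.
  assert (Hr1r2 : r2 * r1 < 1)
    by (apply (Rmult_lt_compat_r r1) in Hr2_lt; [rewrite Rinv_l in Hr2_lt; lra | lra]).
  assert (Hsr1 : s * r1 < r2).
  { apply (Rmult_lt_compat_r r1) in Hs_lt; [|lra].
    unfold Rdiv in Hs_lt. rewrite Rmult_assoc, Rinv_l, Rmult_1_r in Hs_lt; lra. }
  assert (Hinv : r2 < / r0).
  { apply Rlt_trans with (/ r1); [lra | apply Rinv_lt_contravar; nra]. }
  apply Y_biholomorphic_E0; nra.
Qed.
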